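(* Let $m,n\ge0$. The elements $R(I,J)$ with $(I,J)\in X^+(m,n)$ span the ring $U^+_{m,n}$ as a $\mathbb Z$-module.
   Context: $U^+_{m,n}$ is the commutative ring generated over $\mathbb Z$ by $u_1,u_2,\dots$ and $v_0,v_1,\dots$, with conventions $u_0=1$ and $u_i=v_i=0$ for $i<0$, subject to the relations $R_I(w)=0$ for all $I\in\mathbb Z^{m+1}$, where $w_i=u_i-v_{-i-m+n}$ ($i\in\mathbb Z$) and for $I=(i_1,\dots,i_p)\in\mathbb Z^p$, $R_I(w)=\det(w_{i_\alpha+\beta-1})_{1\le\alpha,\beta\le p}$ ($R_\emptyset=1$); write $|I|=p$. For $I\in\mathbb Z^p$ and $J=(j_1,\dots,j_q)$ nonnegative integers, $R(I,J)=R_I(w)u_1^{j_1}\cdots u_q^{j_q}$. $X^+(m,n)$ is the set of pairs $(I,J)$ with $I$ a strictly decreasing finite sequence of integers, $J$ a finite sequence of nonnegative integers, $|I|\le m$, $|J|\le n$, $|I|-|J|=m-n$. *)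

From HB Require Import structures.
From mathcomp Require Import all_boot all_order all_algebra.
From mathcomp Require Import monalg.
Set Implicit Arguments. Unset Strict Implicit. Unset Printing Implicit Defensive.
Import Order.TTheory GRing.Theory Num.Theory.
Local Open Scope ring_scope.

(* Variables of the free polynomial ring over Z:
   inl k  stands for u_{k+1}  (k >= 0),   inr k  stands for v_k  (k >= 0). *)
Definition var := (nat + nat)%type.

Definition Pol := {malg int[{cmonom var}]}.

Definition Xvar (x : var) : Pol := << ucm x >>.

Definition uu (i : int) : Pol :=
  match i with
  | Posz 0 => 1
  | Posz k.+1 => Xvar (inl k)
  | Negz _ => 0
  end.

Definition vv (i : int) : Pol :=
  match i with
  | Posz k => Xvar (inr k)
  | Negz _ => 0
  end.

Definition ww (m n : nat) (i : int) : Pol := uu i - vv (- i - m%:Z + n%:Z).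

(* R_I(w) = det (w_{i_alpha + beta - 1})_{1 <= alpha, beta <= p}, p = |I|;
   with 0-based indices a, b this is the entry w_{I_a + b}. *)
Definition RI (m n : nat) (I : seq int) : Pol :=
  \det (\matrix_(a < size I, b < size I) ww m n (I`_a + b%:Z)).

Definition RIJ (m n : nat) (I : seq int) (J : seq nat) : Pol :=
  RI m n I * \prod_(k < size J) uu (k.+1)%:Z ^+ (nth 0%N J k).

Definition Xplus (m n : nat) (I : seq int) (J : seq nat) : bool :=
  [&& sorted (fun x y : int => y < x) I, (size I <= m)%N, (size J <= n)%N
    & (size I)%:Z - (size J)%:Z == m%:Z - n%:Z].

Definition in_rel_ideal (m n : nat) (P : Pol) : Prop :=
  exists t : seq (Pol * seq int),
    all (fun y => size y.2 == m.+1) t /\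
    P = \sum_(y <- t) y.1 * RI m n y.2.

From HB Require Import structures.
From mathcomp Require Import all_boot all_order all_algebra fingroup perm.
From mathcomp Require Import finmap monalg zify.
Set Implicit Arguments. Unset Strict Implicit. Unset Printing Implicit Defensive.
Import Order.TTheory GRing.Theory Num.Theory.
Local Open Scope ring_scope.

(* Write R_F(w) = det (w_(F_a + b)) for an arbitrary index vector F of length p.
   By downward induction on p <= m + 1, every R_F(w) * P is congruent modulo the
   relations to a Z-combination of the R(I,J); p = m + 1 is a relation and p = 0
   is the theorem.  When p + n < m, bordering F by the row -p leaves R_F(w)
   unchanged.  Otherwise, with q = p + n - m, the products R_F(w) * u^J (|J| = q)
   and the multiples of (p+1)-determinants span a Z-module stable under
   multiplication by every variable: u_j with j <= q enters the monomial,
   v_k = u_(n-m-k) - w_(n-m-k), and a product w_k R_F(w) is moved into the window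
   n - m < k <= q, where w_k = u_k, by Laplace expansion of a bordered
   determinant together with the expansion of a column-deleted minor as a sum of
   row-shifted determinants.  Finally sorting F changes R_F(w) by a sign (or it
   vanishes), which produces a strictly decreasing I. *)

Section HankelDeterminants.
Variables (R : comPzRingType) (w : int -> R).

Definition Rdet p (F : 'I_p -> int) : R :=
  \det (\matrix_(a, b) w (F a + (b : nat)%:Z)).

Definition Rdet_seq (s : seq int) : R := Rdet (fun a : 'I_(size s) => s`_a).

Lemma Rdet_cast p q (e : p = q) (F : 'I_p -> int) (G : 'I_q -> int) :
  (forall a, F a = G (cast_ord e a)) -> Rdet F = Rdet G.
Proof.
case: q / e G => G eFG; congr (\det _); apply/matrixP => a b.
by rewrite !mxE eFG cast_ord_id.
Qed.

Lemma Rdet_tuple p (F : 'I_p -> int) : Rdet F = Rdet_seq [tuple F i | i < p].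
Proof.
by apply: (Rdet_cast (e := esym (size_tuple _))) => a; rewrite nth_mktuple.
Qed.

Lemma Rdet_perm p (F : 'I_p -> int) (s : 'S_p) :
  Rdet (fun i => F (s i)) = (-1) ^+ s * Rdet F.
Proof.
rewrite /Rdet -det_perm -det_mulmx -row_permE; congr (\det _).
by apply/matrixP => a b; rewrite !mxE.
Qed.

Lemma Rdet_eq0_or_sorted p (F : 'I_p -> int) :
  Rdet F = 0 \/ exists s : seq int, exists b : bool,
    [/\ sorted (fun x y : int => y < x) s, size s = p & Rdet F = (-1) ^+ b * Rdet_seq s].
Proof.
have [/injectiveP injF|/injectivePn [i [j neq_ij eqF]]] := boolP (injectiveb F); last first.
  left; apply: (determinant_alternate neq_ij) => b.
  by rewrite !mxE eqF.
right; pose t := [tuple F i | i < p].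
have uniq_t : uniq t by rewrite map_inj_uniq // val_ord_tuple enum_uniq.
pose s := rev (sort <=%O (val t)).
have [sg def_s] : exists sg : 'S_p, s = [tuple tnth t (sg i) | i < p].
  by apply/tuple_permP; rewrite perm_rev perm_sort.
have size_s : size s = p by rewrite def_s size_tuple.
have nth_s (k : 'I_p) : s`_k = F (sg k) by rewrite def_s nth_mktuple tnth_mktuple.
have s_sg : Rdet_seq s = Rdet (fun i => F (sg i)).
  by apply: (Rdet_cast (e := size_s)) => a; exact: (nth_s (cast_ord size_s a)).
exists s, sg; split => //; first by rewrite rev_sorted sort_lt_sorted.
by rewrite s_sg Rdet_perm signrMK.
Qed.

Definition fsnoc p (F : 'I_p -> int) (r : int) : 'I_p.+1 -> int :=
  fun a => if unlift ord_max a is Some a' then F a' else r.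

Definition Rminor p (b0 : 'I_p.+1) (F : 'I_p -> int) : R :=
  \det (\matrix_(a, b) w (F a + (lift b0 b : nat)%:Z)).

Lemma Rdet_fsnoc p (F : 'I_p -> int) r :
  Rdet (fsnoc F r) = \sum_(b : 'I_p.+1) w (r + (b : nat)%:Z) * ((-1) ^+ (p + b) * Rminor b F).
Proof.
rewrite /Rdet (expand_det_row _ ord_max); apply: eq_bigr => b _.
rewrite mxE /fsnoc unlift_none /cofactor /=; congr (_ * (_ * \det _)).
by apply/matrixP => a c; rewrite !mxE /= liftK.
Qed.

Lemma Rminor_max p (F : 'I_p -> int) : Rminor ord_max F = Rdet F.
Proof.
congr (\det _); apply/matrixP => a b.
by rewrite !mxE /= /bump leqNgt ltn_ord.
Qed.

Lemma Rminor_ord0 p (F : 'I_p -> int) : Rminor ord0 (fun a => F a - 1) = Rdet F.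
Proof.
congr (\det _); apply/matrixP => a b; rewrite !mxE /= /bump add1n.
by congr w; lia.
Qed.

Definition colshift_det p (S : {set 'I_p}) (F : 'I_p -> int) : R :=
  \det (\matrix_(a, b) w (F a + (b : nat)%:Z + ((b \in S) : nat)%:Z)).

(* For a fixed permutation [s], the row shift by [S] and the column shift by
   [s @: S] contribute the same term. *)
Lemma sum_rowshift_colshift p (F : 'I_p -> int) k :
  \sum_(S : {set 'I_p} | #|S| == k) Rdet (fun a => F a + ((a \in S) : nat)%:Z) =
  \sum_(S : {set 'I_p} | #|S| == k) colshift_det S F.
Proof.
rewrite /Rdet /colshift_det.
transitivity (\sum_(S : {set 'I_p} | #|S| == k) \sum_(s : 'S_p) (-1) ^+ s *
    \prod_i w (F i + ((i \in S) : nat)%:Z + (s i : nat)%:Z)).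
  by apply: eq_bigr => S _; apply: eq_bigr => s _; congr (_ * _);
     apply: eq_bigr => i _; rewrite mxE.
transitivity (\sum_(S : {set 'I_p} | #|S| == k) \sum_(s : 'S_p) (-1) ^+ s *
    \prod_i w (F i + (s i : nat)%:Z + ((s i \in S) : nat)%:Z)); last first.
  by apply: eq_bigr => S _; apply: eq_bigr => s _; congr (_ * _);
     apply: eq_bigr => i _; rewrite mxE.
rewrite exchange_big [RHS]exchange_big; apply: eq_bigr => s _.
have inE_preim (T : {set 'I_p}) y : (y \in (s^-1)%g @^-1: T) = ((s^-1)%g y \in T).
  by rewrite inE.
rewrite [RHS](reindex_inj (h := fun T : {set 'I_p} => (s^-1)%g @^-1: T)); last first.
  move=> T1 T2 /setP eqT; apply/setP => x; have := eqT (s x).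
  by rewrite !inE_preim permK.
apply: eq_big => [T|T _]; first by rewrite card_preimset //; apply: perm_inj.
congr (_ * _); apply: eq_bigr => i _; rewrite inE_preim permK.
by congr w; rewrite -!addrA [X in _ + X]addrC.
Qed.

Lemma colshift_det_eq0 p (S : {set 'I_p}) (F : 'I_p -> int) (b c : 'I_p) :
  (c : nat) = b.+1 -> b \in S -> c \notin S -> colshift_det S F = 0.
Proof.
move=> def_c Sb Sc; rewrite /colshift_det -det_tr.
apply: (determinant_alternate (i1 := b) (i2 := c)).
  by apply/eqP => /(congr1 val) /=; rewrite def_c; lia.
by move=> j; rewrite !mxE Sb (negbTE Sc) def_c; congr w; lia.
Qed.

Lemma colshift_det_upper p (b0 : 'I_p.+1) (F : 'I_p -> int) :
  colshift_det [set b : 'I_p | (b0 <= b)%N] F = Rminor b0 F.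
Proof.
congr (\det _); apply/matrixP => a b; rewrite !mxE inE /= /bump.
by congr w; case: (b0 <= b)%N => /=; lia.
Qed.

End HankelDeterminants.

Lemma card_upper_set p x : #|[set c : 'I_p | (x <= c)%N]| = (p - x)%N.
Proof.
rewrite -sum1_card (eq_bigl (fun c : 'I_p => true && (x <= c)%N)); last first.
  by move=> c; rewrite inE.
by rewrite -(big_geq_mkord x p xpredT (fun _ => 1%N)) sum_nat_const_nat muln1.
Qed.

Lemma succ_closed_upper_set p (S : {set 'I_p}) (b : 'I_p) :
  (forall x y : 'I_p, (y : nat) = x.+1 -> x \in S -> y \in S) -> b \in S ->
  [set c : 'I_p | (b <= c)%N] \subset S.
Proof.
move=> S_succ Sb; apply/subsetP => c; rewrite inE => le_bc.
suff S_from_b k (c' : 'I_p) : (c' : nat) = (b + k)%N -> c' \in S.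
  by apply: (S_from_b (c - b)%N); lia.
elim: k c' => [|k IHk] c' def_c'.
  by have -> : c' = b by apply: val_inj; rewrite /= def_c' addn0.
have lt_bk : (b + k < p)%N by have := ltn_ord c'; lia.
by apply: (S_succ (Ordinal lt_bk)); [rewrite /= def_c'; lia | apply: IHk].
Qed.

Lemma not_upper_set_gap p (S : {set 'I_p}) (b0 : 'I_p.+1) :
  #|S| = (p - b0)%N -> S != [set b : 'I_p | (b0 <= b)%N] ->
  exists b c : 'I_p, [/\ (c : nat) = b.+1, b \in S & c \notin S].
Proof.
move=> card_S neq_S.
have [/existsP [b /existsP [c /and3P [/eqP ? ? ?]]]|/existsPn noexit] :=
  boolP [exists b : 'I_p, exists c : 'I_p, [&& (c : nat) == b.+1, b \in S & c \notin S]].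
  by exists b, c.
have S_succ (x y : 'I_p) : (y : nat) = x.+1 -> x \in S -> y \in S.
  move=> def_y Sx; move/existsPn: (noexit x) => /(_ y).
  by rewrite def_y eqxx Sx /= negbK.
have sub_S : S \subset [set b : 'I_p | (b0 <= b)%N].
  apply/subsetP => b Sb; rewrite inE; case: (leqP b0 b) => // lt_b_b0.
  have := subset_leq_card (succ_closed_upper_set S_succ Sb).
  by rewrite card_upper_set card_S; have := ltn_ord b0; lia.
move: neq_S; rewrite eqEcard sub_S card_upper_set card_S /=.
by have := ltn_ord b0; rewrite leqnn.
Qed.

(* Among the column shifts only the upper set survives: any other [S] of that
   size contains some [b] but not [b + 1], which makes two columns equal. *)
Lemma Rminor_shift_sum (R : comPzRingType) (w : int -> R) p (b0 : 'I_p.+1) (F : 'I_p -> int) :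
  Rminor w b0 F =
  \sum_(S : {set 'I_p} | #|S| == (p - b0)%N) Rdet w (fun a => F a + ((a \in S) : nat)%:Z).
Proof.
rewrite sum_rowshift_colshift (bigD1 [set b : 'I_p | (b0 <= b)%N]) /=; last first.
  by rewrite card_upper_set.
rewrite colshift_det_upper big1 ?addr0 // => S /andP [/eqP card_S neq_S].
have [b [c [def_c Sb Sc]]] := not_upper_set_gap card_S neq_S.
exact: colshift_det_eq0 def_c Sb Sc.
Qed.

Inductive zspan (V : zmodType) (A : V -> Prop) : V -> Prop :=
| zspan0 : zspan A 0
| zspan_gen x : A x -> zspan A x
| zspanD x y : zspan A x -> zspan A y -> zspan A (x + y)
| zspanN x : zspan A x -> zspan A (- x).

Section ZSpan.
Variables (V : zmodType) (A : V -> Prop).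

Lemma zspanB x y : zspan A x -> zspan A y -> zspan A (x - y).
Proof. by move=> Ax Ay; apply: zspanD => //; apply: zspanN. Qed.

Lemma zspan_sum (I : Type) (r : seq I) (P : pred I) (f : I -> V) :
  (forall i, P i -> zspan A (f i)) -> zspan A (\sum_(i <- r | P i) f i).
Proof. by move=> Af; apply: big_ind => //; [apply: zspan0 | apply: zspanD]. Qed.

Lemma zspan_min (B : V -> Prop) :
  B 0 -> (forall x y, B x -> B y -> B (x + y)) -> (forall x, B x -> B (- x)) ->
  (forall x, A x -> B x) -> forall x, zspan A x -> B x.
Proof. by move=> B0 BD BN AB x; elim => //; auto. Qed.

End ZSpan.

Lemma zspan_sign (R : pzRingType) (A : R -> Prop) k x :
  zspan A x -> zspan A ((-1) ^+ k * x).
Proof.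
move=> Ax; elim: k => [|k IHk]; first by rewrite expr0 mul1r.
by rewrite exprS mulN1r mulNr; apply: zspanN.
Qed.

Lemma zspan_mulr (R : pzRingType) (A B : R -> Prop) (c : R) x :
  (forall y, A y -> zspan B (y * c)) -> zspan A x -> zspan B (x * c).
Proof.
move=> ABc; elim => [|y /ABc //|y z _ IHy _ IHz|y _ IHy].
- by rewrite mul0r; apply: zspan0.
- by rewrite mulrDl; apply: zspanD.
- by rewrite mulNr; apply: zspanN.
Qed.

Section WindowReduction.
Variables (R : comPzRingType) (w : int -> R).

Definition Rdet_multiple p (Q : R) := exists (G : 'I_p -> int) (P : R), Q = Rdet w G * P.

Definition window_term (d : int) p (Q : R) :=
  exists (F : 'I_p -> int) (j : int), d < j <= d + p%:Z /\ Q = Rdet w F * w j.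

Lemma w_mul_Rdet_above p k (F : 'I_p -> int) :
  w k * Rdet w F = Rdet w (fsnoc F (k - p%:Z)) -
    \sum_(i < p) w (k - p%:Z + i%:Z) * ((-1) ^+ (p + i) * Rminor w (widen_ord (leqnSn p) i) F).
Proof.
rewrite Rdet_fsnoc big_ord_recr /= Rminor_max addrC addrK.
by rewrite -signr_odd oddD addbb mul1r subrK.
Qed.

Lemma w_mul_Rdet_below p k (F : 'I_p -> int) :
  w k * Rdet w F = (-1) ^+ p * (Rdet w (fsnoc (fun a => F a - 1) k) -
    \sum_(i < p) w (k + i.+1%:Z) *
      ((-1) ^+ (p + i.+1) * Rminor w (lift ord0 i) (fun a => F a - 1))).
Proof.
by rewrite Rdet_fsnoc big_ord_recl /= Rminor_ord0 addr0 addn0 addrK mulrCA signrMK.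
Qed.

Lemma zspan_w_mul_Rminor (A : R -> Prop) j e p (b0 : 'I_p.+1) (F : 'I_p -> int) :
  (forall G : 'I_p -> int, zspan A (w j * Rdet w G)) ->
  zspan A (w j * ((-1) ^+ e * Rminor w b0 F)).
Proof.
move=> AjG; rewrite mulrCA; apply: zspan_sign.
by rewrite Rminor_shift_sum mulr_sumr; apply: zspan_sum => S _; apply: AjG.
Qed.

(* Bordering [F] by one more row, [w k * R_F] is traded for [(p+1)]-determinants
   and products [w j * R_G] with [j] one step closer to the window [(d, d + p]]. *)
Lemma zspan_w_mul_Rdet d p k (F : 'I_p -> int) :
  zspan (fun Q => window_term d p Q \/ Rdet_multiple p.+1 Q) (w k * Rdet w F).
Proof.
set A := fun Q => _ \/ _.
have multA (G : 'I_p.+1 -> int) : zspan A (Rdet w G).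
  by apply: zspan_gen; right; exists G, 1; rewrite mulr1.
have win j (G : 'I_p -> int) : d < j <= d + p%:Z -> zspan A (w j * Rdet w G).
  by move=> j_win; apply: zspan_gen; left; exists G, j; rewrite mulrC.
suff near_window N : forall k, d + 1 - N%:Z <= k <= d + p%:Z + N%:Z ->
    forall F : 'I_p -> int, zspan A (w k * Rdet w F).
  by apply: (near_window `|k - d|%N.+1); lia.
elim: N => [|N IHN] {}k k_near {}F; first by apply: win; lia.
have [/win //|k_out] := boolP (d < k <= d + p%:Z).
have [lt_dk|le_kd] := ltrP d k.
  rewrite w_mul_Rdet_above; apply: zspanB => //; apply: zspan_sum => i _.
  by apply: zspan_w_mul_Rminor => G; apply: IHN; have := ltn_ord i; lia.
rewrite w_mul_Rdet_below; apply: zspan_sign; apply: zspanB => //.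
by apply: zspan_sum => i _; apply: zspan_w_mul_Rminor => G; apply: IHN; have := ltn_ord i; lia.
Qed.

End WindowReduction.

Section MonalgMulClosed.
Variables (I : choiceType) (H : {malg int[{cmonom I}]} -> Prop).
Hypotheses (H0 : H 0) (HD : forall x y, H x -> H y -> H (x + y)).
Hypotheses (HN : forall x, H x -> H (- x)) (HU : forall Q i, H Q -> H (Q * << ucm i >>)).

Lemma malgU1 : << onecm I >> = 1 :> {malg int[{cmonom I}]}.
Proof. by rewrite -mpolyC1E. Qed.

Lemma malgUM (k1 k2 : cmonom I) :
  << mulcm k1 k2 >> = << k1 >> * << k2 >> :> {malg int[{cmonom I}]}.
Proof. by rewrite malgM_def fgmulUU mulr1. Qed.

Lemma mul_cmonom_closed (k : cmonom I) Q : H Q -> H (Q * << k >>).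
Proof.
have [N] := ubnP (mdeg k); elim: N k Q => // N IHN k Q lt_k_N HQ.
have [/eqP supp0|/fset0Pn [i k_i]] := boolP (finsupp k == fset0).
  suff -> : k = onecm I by rewrite malgU1 mulr1.
  by apply/eqP/cmP => j; rewrite cm1; apply/eqP; rewrite cmE_eq0 supp0 in_fset0.
have def_k : k = mulcm (ucm i) (divcm k (ucm i)).
  apply/eqP/cmP => j; rewrite mulcmE divcmE ucmE.
  by case: eqP => [<-|_]; [move: k_i; rewrite -cmE_neq0; lia | rewrite add0n subn0].
rewrite def_k malgUM mulrA.
apply: IHN; last exact: HU.
by move: lt_k_N; rewrite {1}def_k (mdegM (ucm i)) mdegU.
Qed.

Lemma malg_mul_closed Q P : H Q -> H (Q * P).
Proof.
move=> HQ; have HQk k : H (Q * << k >>) := mul_cmonom_closed k HQ.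
have HQkn k n : H (Q * (<< k >> *+ n)).
  by rewrite mulrnAr; elim: n => [|n IHn]; rewrite ?mulr0n // mulrSr; apply: HD.
rewrite (monalgE P) mulr_sumr; apply: big_ind => // k _.
case: (P@_k) => c; first by rewrite -natz monalgUMn; apply: HQkn.
by rewrite NegzE -natz monalgUN monalgUMn mulrN; apply/HN/HQkn.
Qed.

End MonalgMulClosed.

Section RelationIdeal.
Variables m n : nat.

Lemma rel_ideal0 : in_rel_ideal m n 0.
Proof. by exists [::]; rewrite big_nil. Qed.

Lemma rel_idealD P Q : in_rel_ideal m n P -> in_rel_ideal m n Q -> in_rel_ideal m n (P + Q).
Proof.
move=> [t1 [t1_size ->]] [t2 [t2_size ->]]; exists (t1 ++ t2).
by rewrite all_cat t1_size t2_size big_cat.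
Qed.

Lemma rel_idealN P : in_rel_ideal m n P -> in_rel_ideal m n (- P).
Proof.
move=> [t [t_size ->]]; exists [seq (- y.1, y.2) | y <- t]; rewrite all_map.
by split=> //; rewrite big_map -sumrN; apply: eq_bigr => y _; rewrite mulNr.
Qed.

Lemma rel_ideal_RI s P : size s = m.+1 -> in_rel_ideal m n (RI m n s * P).
Proof.
by move=> size_s; exists [:: (P, s)]; rewrite /= size_s eqxx big_seq1 mulrC.
Qed.

Definition spanned (P : Pol) := exists s : seq (int * (seq int * seq nat)),
  all (fun x => Xplus m n x.2.1 x.2.2) s /\
  in_rel_ideal m n (P - \sum_(x <- s) RIJ m n x.2.1 x.2.2 *~ x.1).

Lemma spanned_rel_ideal P : in_rel_ideal m n P -> spanned P.
Proof. by exists [::]; rewrite big_nil subr0. Qed.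

Lemma spannedD P Q : spanned P -> spanned Q -> spanned (P + Q).
Proof.
move=> [s1 [s1X rel1]] [s2 [s2X rel2]]; exists (s1 ++ s2).
by rewrite all_cat s1X s2X big_cat /= opprD addrACA; split=> //; apply: rel_idealD.
Qed.

Lemma spannedN P : spanned P -> spanned (- P).
Proof.
move=> [s [sX relP]]; exists [seq (- x.1, x.2) | x <- s]; rewrite all_map.
split=> //; rewrite big_map.
under eq_bigr do rewrite mulrNz.
by rewrite sumrN -opprD; exact: rel_idealN relP.
Qed.

Lemma spanned_zspan (A : Pol -> Prop) P :
  (forall Q, A Q -> spanned Q) -> zspan A P -> spanned P.
Proof.
move=> Aspanned; apply: zspan_min => //.
- exact/spanned_rel_ideal/rel_ideal0.
- exact: spannedD.
- exact: spannedN.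
Qed.

End RelationIdeal.

Definition umon (J : seq nat) : Pol := \prod_(k < size J) uu k.+1%:Z ^+ nth 0%N J k.

Lemma umon_nseq0 q : umon (nseq q 0%N) = 1.
Proof. by rewrite /umon big1 // => k _; rewrite nth_nseq if_same expr0. Qed.

Lemma umon_incr_nth (J : seq nat) j :
  (j < size J)%N -> umon (incr_nth J j) = umon J * uu j.+1%:Z.
Proof.
move=> lt_jJ; rewrite /umon size_incr_nth lt_jJ.
under eq_bigr do rewrite nth_incr_nth exprD.
rewrite big_split [LHS]mulrC; congr (_ * _).
rewrite (bigD1 (Ordinal lt_jJ) isT) /= eqxx big1 => [|k].
  by rewrite mulr1.
by rewrite -val_eqE /= eq_sym => /negbTE ->; rewrite expr0.
Qed.

Lemma uu_lt0 (i : int) : i < 0 -> uu i = 0.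
Proof. by case: i => [k|k] //; lia. Qed.

Lemma ww_uu m n (i : int) : n%:Z - m%:Z < i -> ww m n i = uu i.
Proof.
move=> lt_i; rewrite /ww; have : - i - m%:Z + n%:Z < 0 by lia.
by case: (- i - m%:Z + n%:Z) => [k|k] lt_k0; [lia | rewrite /= subr0].
Qed.

Lemma vv_uu_ww m n (j : int) :
  vv j = uu (n%:Z - m%:Z - j) - ww m n (n%:Z - m%:Z - j).
Proof.
rewrite /ww; have -> : - (n%:Z - m%:Z - j) - m%:Z + n%:Z = j by lia.
by rewrite opprB addrC subrK.
Qed.

Lemma spanned_Rdet_umon m n p (F : 'I_p -> int) (J : seq nat) :
  (p <= m)%N -> (p + n = size J + m)%N -> spanned m n (Rdet (ww m n) F * umon J).
Proof.
move=> le_pm size_J.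
have [->|[s [b [sorted_s size_s ->]]]] := Rdet_eq0_or_sorted (ww m n) F.
  by rewrite mul0r; apply/spanned_rel_ideal/rel_ideal0.
exists [:: ((-1) ^+ b, (s, J))]; split.
  rewrite /= andbT /Xplus sorted_s size_s le_pm /=.
  by apply/andP; split; [lia | apply/eqP; lia].
by rewrite big_seq1 /= -mulrzl intr_sign -mulrA subrr; apply: rel_ideal0.
Qed.

(* As [p + n < m], the added row [w_(-p) ... w_0] agrees with [u_(-p) ... u_0 = 0 ... 0 1]. *)
Lemma Rdet_fsnoc_pad m n p (F : 'I_p -> int) :
  (p + n < m)%N -> Rdet (ww m n) (fsnoc F (- p%:Z)) = Rdet (ww m n) F.
Proof.
move=> lt_pn_m; rewrite Rdet_fsnoc big_ord_recr /= big1 ?add0r.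
  rewrite Rminor_max -signr_odd oddD addbb expr0 mul1r addNr.
  by rewrite ww_uu ?mul1r //; lia.
move=> i _; rewrite ww_uu; last by have := ltn_ord i; lia.
by rewrite uu_lt0 ?mul0r //; have := ltn_ord i; lia.
Qed.

Section ReductionStep.
Variables m n p : nat.
Hypotheses (le_pm : (p <= m)%N) (le_m_pn : (m <= p + n)%N).
Hypothesis IHp : forall (G : 'I_p.+1 -> int) (Q : Pol), spanned m n (Rdet (ww m n) G * Q).

Local Notation w := (ww m n).
Local Notation q := (p + n - m)%N.

Definition step_gen (Q : Pol) :=
  (exists (F : 'I_p -> int) (J : seq nat), size J = q /\ Q = Rdet w F * umon J) \/
  Rdet_multiple w p.+1 Q.

Lemma spanned_step_gen Q : step_gen Q -> spanned m n Q.
Proof.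
case=> [[G [J [size_J ->]]]|[G [Q' ->]]]; last exact: IHp.
by apply: spanned_Rdet_umon; lia.
Qed.

Lemma zspan_mul_uu_le (G : 'I_p -> int) J (i : int) :
  size J = q -> i <= q%:Z -> zspan step_gen (Rdet w G * umon J * uu i).
Proof.
move=> size_J; case: i => [[|j]|j] le_iq.
- by rewrite mulr1; apply: zspan_gen; left; exists G, J.
- rewrite -mulrA -umon_incr_nth; last by lia.
  by apply: zspan_gen; left; exists G, (incr_nth J j); rewrite size_incr_nth ifT //; lia.
- by rewrite mulr0; apply: zspan0.
Qed.

Lemma zspan_mul_ww (G : 'I_p -> int) J k :
  size J = q -> zspan step_gen (Rdet w G * umon J * w k).
Proof.
move=> size_J; rewrite mulrAC [Rdet w G * w k]mulrC.
apply: zspan_mulr (zspan_w_mul_Rdet w (n%:Z - m%:Z) k G).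
move=> y [[G' [j [/andP [lt_dj le_jdp] ->]]]|[G' [Q ->]]].
  by rewrite mulrAC ww_uu //; apply: zspan_mul_uu_le => //; lia.
by rewrite -mulrA; apply: zspan_gen; right; exists G', (Q * umon J).
Qed.

Lemma zspan_mul_uu (G : 'I_p -> int) J (i : int) :
  size J = q -> zspan step_gen (Rdet w G * umon J * uu i).
Proof.
move=> size_J; have [le_iq|lt_qi] := lerP i q%:Z; first exact: zspan_mul_uu_le.
by rewrite -(@ww_uu m n); [exact: zspan_mul_ww | lia].
Qed.

Lemma zspan_step_gen_mul_Xvar Q v : zspan step_gen Q -> zspan step_gen (Q * Xvar v).
Proof.
apply: zspan_mulr => _ [[G [J [size_J ->]]]|[G [Q' ->]]]; last first.
  by rewrite -mulrA; apply: zspan_gen; right; exists G, (Q' * Xvar v).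
case: v => k; first exact: zspan_mul_uu (k.+1)%:Z size_J.
rewrite [Xvar _](@vv_uu_ww m n k%:Z) mulrBr.
by apply: zspanB; [exact: zspan_mul_uu | exact: zspan_mul_ww].
Qed.

Lemma spanned_Rdet_mul_step (F : 'I_p -> int) (P : Pol) : spanned m n (Rdet w F * P).
Proof.
apply: (spanned_zspan spanned_step_gen).
rewrite -[Rdet w F]mulr1 -(umon_nseq0 q).
apply: (malg_mul_closed (H := zspan step_gen)) => //; first exact: zspan0.
- exact: zspanD.
- exact: zspanN.
- exact: zspan_step_gen_mul_Xvar.
by apply: zspan_gen; left; exists F, (nseq q 0%N); rewrite size_nseq.
Qed.

End ReductionStep.

Lemma spanned_Rdet_mul m n p (F : 'I_p -> int) (P : Pol) :
  (p <= m.+1)%N -> spanned m n (Rdet (ww m n) F * P).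
Proof.
move=> le_p_m1; have [k def_k] : exists k, (p + k = m.+1)%N by exists (m.+1 - p)%N; lia.
elim: k p def_k F P {le_p_m1} => [|k IHk] p def_p F P.
  rewrite addn0 in def_p; subst p.
  by apply: spanned_rel_ideal; rewrite Rdet_tuple; apply: rel_ideal_RI; rewrite size_tuple.
have le_pm : (p <= m)%N by lia.
have [lt_pn_m|le_m_pn] := ltnP (p + n) m.
  by rewrite -(Rdet_fsnoc_pad F lt_pn_m); apply: IHk; lia.
by apply: spanned_Rdet_mul_step le_pm le_m_pn _ F P => G Q; apply: IHk; lia.
Qed.

Theorem mainTheorem9 (m n : nat) (P : Pol) :
  exists s : seq (int * (seq int * seq nat)),
    all (fun x => Xplus m n x.2.1 x.2.2) s /\
    in_rel_ideal m n (P - \sum_(x <- s) RIJ m n x.2.1 x.2.2 *~ x.1).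
Proof.
have := @spanned_Rdet_mul m n 0 (fun _ => 0) P (leq0n _).
by rewrite /Rdet det_mx00 mul1r.
Qed.
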